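(* Let $\theta_1,\theta_2\in\mathbb{R}$ satisfy $\sin(\theta_1)=0$ and $\sin(\theta_2)=0$. Then the two-player two-strategy game with payoffs \[ G_1=\begin{bmatrix}\frac{1}{\sqrt2}\sin(\theta_1+\frac{\pi}{4})&\frac{1}{\sqrt2}\cos(\theta_1+\frac{\pi}{4})\\ -\frac{1}{\sqrt2}\sin(\theta_1+\frac{\pi}{4})&-\frac{1}{\sqrt2}\cos(\theta_1+\frac{\pi}{4})\end{bmatrix},\qquad G_2=\begin{bmatrix}\frac{1}{\sqrt2}\sin(\theta_2+\frac{\pi}{4})&-\frac{1}{\sqrt2}\sin(\theta_2+\frac{\pi}{4})\\ \frac{1}{\sqrt2}\cos(\theta_2+\frac{\pi}{4})&-\frac{1}{\sqrt2}\cos(\theta_2+\frac{\pi}{4})\end{bmatrix} \] (rows indexed by player 1's strategy, columns by player 2's strategy) is both invariant-zero-sum and invariant-common-payoff.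
   Context: A two-player game $(G_1,G_2)$ is invariant-zero-sum (resp. invariant-common-payoff) if there exist scalars $s_1,s_2>0$ and functions $b_1$ (of player 2's strategy $a_2$) and $b_2$ (of player 1's strategy $a_1$) such that $\hat G_p(a)=s_pG_p(a)+b_p(a_{-p})$ satisfy $\hat G_1(a)+\hat G_2(a)=0$ (resp. $\hat G_1(a)=\hat G_2(a)$) for all joint strategies $a=(a_1,a_2)$. *)

From Stdlib Require Export Reals.
Open Scope R_scope.

Definition invariant_zero_sum {A1 A2 : Type} (G1 G2 : A1 -> A2 -> R) : Prop :=
  exists (s1 s2 : R) (b1 : A2 -> R) (b2 : A1 -> R),
    0 < s1 /\ 0 < s2 /\
    forall (a1 : A1) (a2 : A2),
      (s1 * G1 a1 a2 + b1 a2) + (s2 * G2 a1 a2 + b2 a1) = 0.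

Definition invariant_common_payoff {A1 A2 : Type} (G1 G2 : A1 -> A2 -> R) : Prop :=
  exists (s1 s2 : R) (b1 : A2 -> R) (b2 : A1 -> R),
    0 < s1 /\ 0 < s2 /\
    forall (a1 : A1) (a2 : A2),
      s1 * G1 a1 a2 + b1 a2 = s2 * G2 a1 a2 + b2 a1.

Inductive strat : Type := first | second.

Definition G1 (th1 : R) (a1 a2 : strat) : R :=
  match a1, a2 with
  | first, first => / sqrt 2 * sin (th1 + PI / 4)
  | first, second => / sqrt 2 * cos (th1 + PI / 4)
  | second, first => - (/ sqrt 2 * sin (th1 + PI / 4))
  | second, second => - (/ sqrt 2 * cos (th1 + PI / 4))
  end.

Definition G2 (th2 : R) (a1 a2 : strat) : R :=
  match a1, a2 with
  | first, first => / sqrt 2 * sin (th2 + PI / 4)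
  | first, second => - (/ sqrt 2 * sin (th2 + PI / 4))
  | second, first => / sqrt 2 * cos (th2 + PI / 4)
  | second, second => - (/ sqrt 2 * cos (th2 + PI / 4))
  end.

From Stdlib Require Import Reals Lra.
Open Scope R_scope.

(* When [sin th = 0] we have [sin (th + PI/4) = cos (th + PI/4)], so player 1's
   payoff depends only on player 1's strategy and player 2's only on player 2's.
   In such a game the offset [b_p], a function of the opponent's strategy, can
   absorb the opponent's payoff: with unit scales, [b1 := -g2] and [b2 := -g1]
   make the game zero-sum, and [b1 := g2], [b2 := g1] make it common-payoff. *)

Section NonInteracting.

Context {A1 A2 : Type} (g1 g2 : A1 -> A2 -> R) (f1 : A1 -> R) (f2 : A2 -> R).
Hypothesis g1E : forall a1 a2, g1 a1 a2 = f1 a1.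
Hypothesis g2E : forall a1 a2, g2 a1 a2 = f2 a2.

Lemma invariant_zero_sum_noninteracting : invariant_zero_sum g1 g2.
Proof.
  exists 1, 1, (fun a2 => - f2 a2), (fun a1 => - f1 a1).
  repeat split; try lra.
  intros a1 a2; rewrite g1E, g2E; ring.
Qed.

Lemma invariant_common_payoff_noninteracting : invariant_common_payoff g1 g2.
Proof.
  exists 1, 1, f2, f1.
  repeat split; try lra.
  intros a1 a2; rewrite g1E, g2E; ring.
Qed.

End NonInteracting.

Lemma sin_add_PI4_eq_cos (th : R) : sin th = 0 -> sin (th + PI / 4) = cos (th + PI / 4).
Proof. intros H; rewrite sin_plus, cos_plus, H, sin_PI4, cos_PI4; ring. Qed.

Lemma G1_own_strategy (th : R) : sin th = 0 -> forall a1 a2, G1 th a1 a2 = G1 th a1 first.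
Proof. intros H [|] [|]; unfold G1; rewrite ?sin_add_PI4_eq_cos by exact H; reflexivity. Qed.

Lemma G2_own_strategy (th : R) : sin th = 0 -> forall a1 a2, G2 th a1 a2 = G2 th first a2.
Proof. intros H [|] [|]; unfold G2; rewrite ?sin_add_PI4_eq_cos by exact H; reflexivity. Qed.

Theorem mainTheorem5 (th1 th2 : R) :
  sin th1 = 0 -> sin th2 = 0 ->
  invariant_zero_sum (G1 th1) (G2 th2) /\
  invariant_common_payoff (G1 th1) (G2 th2).
Proof.
  intros H1 H2.
  pose proof (G1_own_strategy th1 H1) as G1E.
  pose proof (G2_own_strategy th2 H2) as G2E.
  split.
  - exact (invariant_zero_sum_noninteracting _ _ _ _ G1E G2E).
  - exact (invariant_common_payoff_noninteracting _ _ _ _ G1E G2E).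
Qed.
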